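(* Let $n\ge2$ and let $g:\mathcal{D}_n\to\mathbb{R}$ be jointly Lebesgue measurable. Consider the conditions: (D1) for every $\mathbf{R}\in[0,\infty)^n\setminus\{\mathbf{0}\}$, $\boldsymbol{\pi}\mapsto g(\boldsymbol{\pi},\mathbf{R})$ is concave on $\mathcal{D}_n(\cdot\mid\mathbf{R})$; (D2) $g(\boldsymbol{\pi},\mathbf{R})=0$ whenever $\mathbf{R}$ is constant on $\supp(\boldsymbol{\pi})$; (D3) $g(\boldsymbol{\pi},\alpha\mathbf{R})=g(\boldsymbol{\pi},\mathbf{R})$ for all $(\boldsymbol{\pi},\mathbf{R})\in\mathcal{D}_n$ and $\alpha>0$; (D4) there exist a Lebesgue measurable map $\mathbf{a}:[0,\infty)^n\setminus\{\mathbf{0}\}\to\mathbb{R}^n$ and a Lebesgue measurable $b:(0,\infty)\to\mathbb{R}$ such that for every $m\in(0,\infty)$ and $\mathbf{R}\in[0,\infty)^n\setminus\{\mathbf{0}\}$, $g(\boldsymbol{\pi},\mathbf{R})=\langle\mathbf{a}(\mathbf{R}),\boldsymbol{\pi}\rangle+b(m)$ for all $\boldsymbol{\pi}\in C_{m,\mathbf{R}}$, where $C_{m,\mathbf{R}}=\{\boldsymbol{\pi}\in\mathcal{D}_n(\cdot\mid\mathbf{R}):\langle\boldsymbol{\pi},\mathbf{R}\rangle=m\}$. Then: (i) $g$ is a gap function with a Lebesgue measurable generator if and only if $g$ satisfies (D2) and (D4); in that case, its generator is concave if and only if (D1) holds. (ii) $g$ satisfies (D2), (D3) and (D4) if and only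 if $g=c\,\Gamma$ for some $c\in\mathbb{R}$; in that case, $c\ge0$ if and only if (D1) holds.
   Context: $\Delta_n=\{\mathbf{x}\in[0,1]^n:\sum_ix_i=1\}$; $\supp(\mathbf{x})=\{i:x_i>0\}$; $\mathcal{D}_n=\{(\boldsymbol{\pi},\mathbf{R})\in\Delta_n\times[0,\infty)^n:\supp(\boldsymbol{\pi})\subseteq\supp(\mathbf{R})\}$; for $\mathbf{R}\in[0,\infty)^n\setminus\{\mathbf{0}\}$, $\mathcal{D}_n(\cdot\mid\mathbf{R})=\{\boldsymbol{\pi}\in\Delta_n:(\boldsymbol{\pi},\mathbf{R})\in\mathcal{D}_n\}$. A function $g:\mathcal{D}_n\to\mathbb{R}$ is a gap function with generator $\varphi:(0,\infty)\to\mathbb{R}$ if $g(\boldsymbol{\pi},\mathbf{R})=\varphi\big(\sum_{i\in\supp(\boldsymbol{\pi})}\pi_iR_i\big)-\sum_{i\in\supp(\boldsymbol{\pi})}\pi_i\varphi(R_i)$ for all $(\boldsymbol{\pi},\mathbf{R})\in\mathcal{D}_n$. The excess growth rate $\Gamma$ is the gap function with generator $\varphi=\log$. *)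

From HB Require Import structures.
From mathcomp Require Import all_boot all_order all_algebra.
From mathcomp Require Import all_classical all_reals all_analysis.
Set Implicit Arguments. Unset Strict Implicit. Unset Printing Implicit Defensive.
Import Order.TTheory GRing.Theory Num.Theory.
Local Open Scope classical_set_scope.
Local Open Scope ring_scope.

Section Defs.
Variable R : realType.

Definition box k (a b : 'I_k -> R) : set ('I_k -> R) :=
  [set x | forall i, a i <= x i <= b i].
Definition box_vol k (a b : 'I_k -> R) : R := \prod_(i < k) (b i - a i).

Definition leb_outer k (A : set ('I_k -> R)) : \bar R :=
  ereal_inf [set s : \bar R | exists a b : nat -> 'I_k -> R,
     [/\ (forall j i, a j i <= b j i),
         A `<=` \bigcup_j box (a j) (b j) &
         s = (\sum_(0 <= j <oo) (box_vol (a j) (b j))%:E)%E]].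

Definition leb_measurable k (E : set ('I_k -> R)) : Prop :=
  forall X : set ('I_k -> R),
    leb_outer X = (leb_outer (X `&` E) + leb_outer (X `&` ~` E))%E.

Definition leb_measurable_fun k (D : set ('I_k -> R)) (f : ('I_k -> R) -> R) : Prop :=
  leb_measurable D /\ forall t : R, leb_measurable (D `&` [set x | f x < t]).

Definition leb_measurable_fun1 (D : set R) (f : R -> R) : Prop :=
  leb_measurable_fun [set x : 'I_1 -> R | D (x ord0)] (fun x => f (x ord0)).

Definition leb_measurable_vfun k m (D : set ('I_k -> R))
    (f : ('I_k -> R) -> ('I_m -> R)) : Prop :=
  forall j : 'I_m, leb_measurable_fun D (fun x => f x j).

Definition supp n (x : 'I_n -> R) : pred 'I_n := fun i => 0 < x i.

Definition simplex n (x : 'I_n -> R) : Prop :=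
  (forall i, 0 <= x i <= 1) /\ \sum_(i < n) x i = 1.

Definition nonneg n (x : 'I_n -> R) : Prop := forall i, 0 <= x i.

Definition nonneg_nz n (x : 'I_n -> R) : Prop := nonneg x /\ x <> (fun _ => 0).

Definition inD n (p r : 'I_n -> R) : Prop :=
  simplex p /\ nonneg r /\ (forall i, 0 < p i -> 0 < r i).

(* D_n as a subset of R^(n+n) (first n coordinates pi, last n coordinates R) *)
Definition pi_part n (x : 'I_(n + n) -> R) : 'I_n -> R := fun i => x (lshift n i).
Definition R_part n (x : 'I_(n + n) -> R) : 'I_n -> R := fun i => x (rshift n i).
Definition Dset n : set ('I_(n + n) -> R) := [set x | inD (pi_part x) (R_part x)].

(* g : D_n -> R (only its values on D_n matter) is jointly Lebesgue measurable *)
Definition jointly_leb_measurable n (g : ('I_n -> R) -> ('I_n -> R) -> R) : Prop :=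
  leb_measurable_fun (@Dset n) (fun x => g (pi_part x) (R_part x)).

Definition wmean n (p r : 'I_n -> R) : R := \sum_(i < n | 0 < p i) p i * r i.

Definition dot n (x y : 'I_n -> R) : R := \sum_(i < n) x i * y i.

Definition is_gap_function n (g : ('I_n -> R) -> ('I_n -> R) -> R) (phi : R -> R) : Prop :=
  forall p r, inD p r ->
    g p r = phi (wmean p r) - \sum_(i < n | 0 < p i) p i * phi (r i).

Definition Gamma n (p r : 'I_n -> R) : R :=
  ln (wmean p r) - \sum_(i < n | 0 < p i) p i * ln (r i).

Definition pos_reals : set R := [set x | 0 < x].

Definition concave_on_pos (phi : R -> R) : Prop :=
  forall x y t : R, 0 < x -> 0 < y -> 0 <= t <= 1 ->
    t * phi x + (1 - t) * phi y <= phi (t * x + (1 - t) * y).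

Definition cond_D1 n (g : ('I_n -> R) -> ('I_n -> R) -> R) : Prop :=
  forall r, nonneg_nz r ->
  forall p1 p2 (t : R), inD p1 r -> inD p2 r -> 0 <= t <= 1 ->
    t * g p1 r + (1 - t) * g p2 r <= g (fun i => t * p1 i + (1 - t) * p2 i) r.

Definition cond_D2 n (g : ('I_n -> R) -> ('I_n -> R) -> R) : Prop :=
  forall p r, inD p r ->
    (forall i j, 0 < p i -> 0 < p j -> r i = r j) -> g p r = 0.

Definition cond_D3 n (g : ('I_n -> R) -> ('I_n -> R) -> R) : Prop :=
  forall p r (alpha : R), inD p r -> 0 < alpha ->
    g p (fun i => alpha * r i) = g p r.

Definition cond_D4 n (g : ('I_n -> R) -> ('I_n -> R) -> R) : Prop :=
  exists (a : ('I_n -> R) -> ('I_n -> R)) (b : R -> R),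
    [/\ leb_measurable_vfun (@nonneg_nz n) a,
        leb_measurable_fun1 pos_reals b &
        forall (m : R) r, 0 < m -> nonneg_nz r ->
        forall p, inD p r -> dot p r = m ->
          g p r = dot (a r) p + b m].

End Defs.

(* A gap function with generator phi satisfies (D2) trivially and (D4) with
   a(R)_i = -phi(R_i) and b = phi.  Conversely (D2) makes g vanish at the
   vertices e_i, so (D4) at the vertices forces a(R)_i = -b(R_i), and g is the gap
   function of b.  Evaluating g at two-point vectors R = (x, y, ..., y) along the
   segment [e_0, e_1] transports concavity between phi and g.

   For (ii), (D3) makes z |-> phi(alpha z) - phi(z) affine on (0, oo) for every
   alpha > 0; comparing the two resulting expressions of phi(alpha x) shows that
   B(x) = phi(x) - phi(1) - d (x - 1) satisfies B(xy) = B(x) + B(y).  Since phi is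
   measurable, B is bounded on a subset of [1, 2] of positive outer measure; by
   Steinhaus' argument the ratios of that set fill an interval [1, 1 + delta], so
   B is bounded there and the Cauchy equation forces B = c ln.  The affine part of
   phi is invisible to the gap function, hence g = c Gamma. *)

From HB Require Import structures.
From mathcomp Require Import all_boot all_order all_algebra.
From mathcomp Require Import all_classical all_reals all_analysis.
From mathcomp Require Import ring lra.
Import Order.TTheory GRing.Theory Num.Theory.
Set Implicit Arguments. Unset Strict Implicit. Unset Printing Implicit Defensive.
Local Open Scope classical_set_scope.
Local Open Scope ring_scope.

Lemma nneseries_bij_pair (R : realType) (f : {bij [set: nat] >-> [set: nat * nat]})
    (u : nat -> nat -> \bar R) : (forall i j, (0 <= u i j)%E) ->
  (\sum_(m <oo) u (f m).1 (f m).2 = \sum_(i <oo) \sum_(j <oo) u i j)%E.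
Proof.
move=> u_ge0; pose v (p : nat * nat) := u p.1 p.2.
have v_ge0 p : (0 <= v p)%E by exact: u_ge0.
rewrite -(esum_pred_image v _ xpredT) ?[fun=> _]set_true ?image_eq //.
rewrite nneseries_esumT; last by move=> i; exact: nneseries_ge0.
rewrite (_ : [set: nat * nat] = [set: nat] `*`` fun=> [set: nat]); last first.
  by apply/seteqP; split.
rewrite -esum_esum //; apply: eq_esum => i _.
by rewrite nneseries_esumT //; exact: u_ge0.
Qed.

(** * The box outer measure *)

(* In dimension 0 every box has volume 1 (an empty product), so every cover has
   total volume +oo, even that of [set0]: [leb_outer] is an outer measure only in
   positive dimension [k.+1]. *)
Section box_outer_measure.
Variables (R : realType) (k : nat).
Local Notation T := ('I_k.+1 -> R).
Local Notation louter := (@leb_outer R k.+1).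
Local Open Scope ereal_scope.

Lemma box_vol_ge0 (a b : T) : (forall i, a i <= b i)%R -> (0 <= box_vol a b)%R.
Proof. by move=> ab; apply: prodr_ge0 => i _; rewrite subr_ge0. Qed.

Lemma box_vol_xx (a : T) : box_vol a a = 0%R.
Proof. by rewrite /box_vol (bigD1 ord0) //= subrr mul0r. Qed.

Lemma leb_outer_le_cover (A : set T) (a b : nat -> T) :
  (forall j i, a j i <= b j i)%R -> A `<=` \bigcup_j box (a j) (b j) ->
  louter A <= \sum_(0 <= j <oo) (box_vol (a j) (b j))%:E.
Proof. by move=> ab Acov; apply: ereal_inf_lbound; exists a, b. Qed.

Lemma leb_outer_ge0 (A : set T) : 0 <= louter A.
Proof.
apply: le_ereal_inf_tmp => _ [a [b [ab _ ->]]].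
by apply: nneseries_ge0 => j _; rewrite lee_fin box_vol_ge0.
Qed.

Lemma le_leb_outer : {homo louter : A B / A `<=` B >-> A <= B}.
Proof.
move=> A B AB; apply: le_ereal_inf => _ [a [b [ab Bcov ->]]].
by exists a, b; split => //; apply: subset_trans Bcov.
Qed.

Lemma leb_outer_box (a b : T) : (forall i, a i <= b i)%R ->
  louter (box a b) <= (box_vol a b)%:E.
Proof.
move=> ab; pose a' j := if j is 0%N then a else b.
apply: (le_trans (@leb_outer_le_cover _ a' (fun=> b) _ _)).
- by case=> [|j] i //=.
- by move=> x abx; exists 0%N.
rewrite (nneseries_split _ 1); last first.
  by case=> [|j] _; rewrite lee_fin box_vol_ge0.
by rewrite big_nat1 eseries0 ?adde0 // => -[|j] // _ _; rewrite box_vol_xx.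
Qed.

Lemma leb_outer_point (x : T) : louter [set x] = 0.
Proof.
apply/eqP; rewrite eq_le leb_outer_ge0 andbT.
have := leb_outer_box (fun i => lexx (x i)); rewrite box_vol_xx; apply: le_trans.
by apply: le_leb_outer => y -> i; rewrite lexx.
Qed.

Lemma leb_outer0 : louter set0 = 0.
Proof.
apply/eqP; rewrite eq_le leb_outer_ge0 andbT -(leb_outer_point (fun=> 0%R)).
exact: le_leb_outer.
Qed.

Lemma leb_outer_approx (A : set T) (e : R) : (0 < e)%R -> louter A \is a fin_num ->
  exists a b : nat -> T, [/\ forall j i, (a j i <= b j i)%R,
    A `<=` \bigcup_j box (a j) (b j) &
    \sum_(0 <= j <oo) (box_vol (a j) (b j))%:E < louter A + e%:E].
Proof.
by move=> e0 /(lb_ereal_inf_adherent e0)[_ [a [b [ab Acov ->]]] lt]; exists a, b.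
Qed.

Lemma leb_outer_bigcup_cover (A : nat -> set T) (a b : nat -> nat -> T) :
  (forall i j l, a i j l <= b i j l)%R ->
  (forall i, A i `<=` \bigcup_j box (a i j) (b i j)) ->
  louter (\bigcup_i A i) <=
    \sum_(0 <= i <oo) \sum_(0 <= j <oo) (box_vol (a i j) (b i j))%:E.
Proof.
move=> ab Acov; have /card_esym/ppcard_eqP[f] := card_nat2.
rewrite -(nneseries_bij_pair f); last by move=> i j; rewrite lee_fin box_vol_ge0.
apply: leb_outer_le_cover => [m l|x [i _ /Acov[j _ abx]]]; first exact: ab.
by exists (f^-1%FUN (i, j)) => //=; rewrite invK ?inE.
Qed.

Lemma leb_outer_sigma_subadditive : sigma_subadditive louter.
Proof.
move=> A; have [[i Aioo]|/forallNP Afin] := pselect (exists i, louter (A i) = +oo).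
  rewrite (eseries_pinfty _ _ Aioo) ?leey // => j _.
  by rewrite -ltNye (lt_le_trans _ (leb_outer_ge0 _)).
apply/lee_addgt0Pr => e e0.
have Afin' j : louter (A j) \is a fin_num.
  by rewrite ge0_fin_numE ?leb_outer_ge0 // ltey; apply/eqP; exact: Afin.
have /choice[ab covers] j : exists ab : (nat -> T) * (nat -> T), [/\
    forall m i, (ab.1 m i <= ab.2 m i)%R,
    A j `<=` \bigcup_m box (ab.1 m) (ab.2 m) &
    \sum_(0 <= m <oo) (box_vol (ab.1 m) (ab.2 m))%:E <=
      louter (A j) + (e / (2 ^ j.+1)%:R)%:E].
  have ej : (0 < e / (2 ^ j.+1)%:R)%R by rewrite divr_gt0 // ltr0n expn_gt0.
  have [a [b [ab Acov lt]]] := leb_outer_approx ej (Afin' j).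
  by exists (a, b); split => //; exact: ltW.
apply: le_trans (epsilon_trick _ (fun j => leb_outer_ge0 (A j)) (ltW e0)).
apply: le_trans (leb_outer_bigcup_cover (a := fun j => (ab j).1) (b := fun j => (ab j).2)
  _ _) _.
- by move=> j; case: (covers j).
- by move=> j; case: (covers j).
apply: lee_nneseries => [j _ _|j _]; last by case: (covers j).
by apply: nneseries_ge0 => m _ _; rewrite lee_fin box_vol_ge0 //; case: (covers j).
Qed.

HB.instance Definition _ := isOuterMeasure.Build R T louter leb_outer0 leb_outer_ge0
  le_leb_outer leb_outer_sigma_subadditive.

Lemma leb_measurableI (A B : set T) :
  leb_measurable A -> leb_measurable B -> leb_measurable (A `&` B).
Proof. exact: (@caratheodory_measurable_setI R T louter). Qed.

Lemma leb_measurableU (A B : set T) :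
  leb_measurable A -> leb_measurable B -> leb_measurable (A `|` B).
Proof. exact: (@caratheodory_measurable_setU R T louter). Qed.

Lemma leb_measurableC (A : set T) : leb_measurable A -> leb_measurable (~` A).
Proof. exact: (@caratheodory_measurable_setC R T louter). Qed.

Lemma leb_measurableD (A B : set T) :
  leb_measurable A -> leb_measurable B -> leb_measurable (A `\` B).
Proof. exact: (@caratheodory_measurable_setD R T louter). Qed.

Lemma leb_measurable_bigcup (A : nat -> set T) :
  (forall j, leb_measurable (A j)) -> leb_measurable (\bigcup_j A j).
Proof. exact: (@caratheodory_measurable_bigcup R T louter). Qed.

Lemma leb_measurableT : leb_measurable [set: T].
Proof. by rewrite -setC0; apply/leb_measurableC/caratheodory_measurable_set0. Qed.

Lemma leb_measurable_cst (P : Prop) : leb_measurable [set _ : T | P].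
Proof.
have [HP|HP] := pselect P.
  rewrite (_ : [set _ | P] = setT); first exact: leb_measurableT.
  by apply/seteqP; split.
rewrite (_ : [set _ | P] = set0); last by apply/seteqP; split => x // /HP.
by rewrite -setCT; exact/leb_measurableC/leb_measurableT.
Qed.

Lemma le_leb_measurable (A : set T) :
  (forall X, louter (X `&` A) + louter (X `&` ~` A) <= louter X) ->
  leb_measurable A.
Proof. exact: (@le_caratheodory_measurable R T louter). Qed.

Lemma leb_measurable_null (A : set T) : louter A = 0 -> leb_measurable A.
Proof.
move=> A0; apply: le_leb_measurable => X.
rewrite (_ : louter (X `&` A) = 0); last first.
  by apply/eqP; rewrite eq_le leb_outer_ge0 -A0 le_leb_outer //; exact: subIsetr.
by rewrite add0e le_leb_outer //; exact: subIsetl.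
Qed.

End box_outer_measure.

Definition set_coord (R : Type) k (f : 'I_k -> R) (i : 'I_k) (v : R) : 'I_k -> R :=
  fun j => if j == i then v else f j.

Definition to_R1 (R : Type) (X : set R) : set ('I_1 -> R) := [set y | X (y ord0)].

Section box_slices.
Variables (R : realType) (k : nat).
Local Notation T := ('I_k.+1 -> R).
Local Notation louter := (@leb_outer R k.+1).

Definition face_vol (a b : T) i := \prod_(j < k.+1 | j != i) (b j - a j).

Lemma face_vol_ge0 (a b : T) i : (forall j, a j <= b j) -> 0 <= face_vol a b i.
Proof. by move=> ab; apply: prodr_ge0 => j _; rewrite subr_ge0. Qed.

Lemma box_vol_face (a b : T) i : box_vol a b = (b i - a i) * face_vol a b i.
Proof. by rewrite /box_vol (bigD1 i). Qed.

Lemma set_coord_id (f : T) i : set_coord f i (f i) = f.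
Proof. by apply/funext => j; rewrite /set_coord; case: eqP => [->|]. Qed.

Lemma box_vol_set_coord (a b : T) i u v :
  box_vol (set_coord a i u) (set_coord b i v) = (v - u) * face_vol a b i.
Proof.
rewrite (box_vol_face _ _ i) /set_coord !eqxx; congr (_ * _).
by apply: eq_bigr => j /negbTE ->.
Qed.

Lemma box_vol_split (a b : T) i c :
  box_vol a (set_coord b i c) + box_vol (set_coord a i c) b = box_vol a b.
Proof.
rewrite -[in box_vol a _](set_coord_id a i) -[in box_vol _ b](set_coord_id b i).
by rewrite !box_vol_set_coord (box_vol_face _ _ i) -mulrDl; congr (_ * _); ring.
Qed.

Lemma leb_measurable_halfspace (H : set T) i c :
  (forall x, H x -> x i <= c) -> (forall x, ~ H x -> c <= x i) ->
  leb_measurable H.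
Proof.
move=> Hle Hge; apply: le_leb_measurable => X.
apply: le_ereal_inf_tmp => _ [a [b [ab Xcov ->]]].
(* cut every covering box by the hyperplane [x i = cl j], [c] clamped into the box *)
pose cl j := Num.max (a j i) (Num.min (b j i) c).
have cl_ab j : a j i <= cl j <= b j i by rewrite le_max lexx ge_max ab ge_min lexx.
have ab1 j l : a j l <= set_coord (b j) i (cl j) l.
  by rewrite /set_coord; case: eqP => [->|_]; [case/andP: (cl_ab j)|exact: ab].
have ab2 j l : set_coord (a j) i (cl j) l <= b j l.
  by rewrite /set_coord; case: eqP => [->|_]; [case/andP: (cl_ab j)|exact: ab].
apply: le_trans (leeD (leb_outer_le_cover ab1 _) (leb_outer_le_cover ab2 _)) _.
- move=> x [/Xcov[j _ abx] Hx]; exists j => // l; rewrite /set_coord.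
  case: eqP => [->|_]; last exact: abx.
  have /andP[xa xb] := abx i.
  by rewrite xa le_max le_min xb (Hle _ Hx) orbT.
- move=> x [/Xcov[j _ abx] Hx]; exists j => // l; rewrite /set_coord.
  case: eqP => [->|_]; last exact: abx.
  have /andP[xa xb] := abx i.
  by rewrite xb andbT ge_max xa ge_min (Hge _ Hx) orbT.
rewrite -nneseriesD => [|j _ _|j _ _]; last 2 first.
- by rewrite lee_fin box_vol_ge0.
- by rewrite lee_fin box_vol_ge0.
apply: lee_nneseries => [j _ _|j _]; last by rewrite -EFinD box_vol_split.
by rewrite -EFinD lee_fin box_vol_split box_vol_ge0.
Qed.

Lemma leb_measurable_coord_lt i c : leb_measurable [set x : T | x i < c].
Proof.
apply: (@leb_measurable_halfspace _ i c) => x /=; first exact: ltW.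
by move/negP; rewrite -leNgt.
Qed.

Lemma leb_measurable_coord_le i c : leb_measurable [set x : T | x i <= c].
Proof.
apply: (@leb_measurable_halfspace _ i c) => x //=.
by move/negP; rewrite -ltNge => /ltW.
Qed.

Lemma leb_measurable_coord_gt i c : leb_measurable [set x : T | c < x i].
Proof.
rewrite (_ : [set x | c < x i] = ~` [set x | x i <= c]).
  exact/leb_measurableC/leb_measurable_coord_le.
by apply/funext => x; rewrite /setC /=; apply/propext; rewrite ltNge; split => /negP.
Qed.

Lemma leb_measurable_coord_ge i c : leb_measurable [set x : T | c <= x i].
Proof.
rewrite (_ : [set x | c <= x i] = ~` [set x | x i < c]).
  exact/leb_measurableC/leb_measurable_coord_lt.
by apply/funext => x; rewrite /setC /=; apply/propext; rewrite leNgt; split => /negP.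
Qed.

Lemma leb_outer_cylinder_cover (a b : T) i (X : set R) (c d : nat -> 'I_1 -> R) :
  (forall j, a j <= b j) -> (forall j l, c j l <= d j l) ->
  box (cst (a i)) (cst (b i)) `&` to_R1 X `<=` \bigcup_j box (c j) (d j) ->
  (louter (box a b `&` [set x | X (x i)]) <=
     (face_vol a b i)%:E * \sum_(0 <= j <oo) (box_vol (c j) (d j))%:E)%E.
Proof.
move=> ab cd Xcov.
pose c' j := set_coord a i (c j ord0); pose d' j := set_coord b i (d j ord0).
have cd' j l : c' j l <= d' j l.
  by rewrite /c' /d' /set_coord; case: eqP => _; [exact: cd|exact: ab].
apply: le_trans (leb_outer_le_cover cd' _) _.
  move=> x [abx Xx]; have [j _ cdx] := Xcov (cst (x i)) (conj (fun _ => abx i) Xx).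
  exists j => // l; rewrite /c' /d' /set_coord.
  by case: eqP => [->|_]; [exact: cdx|exact: abx].
rewrite -nneseriesZl => [|j _]; last by rewrite lee_fin box_vol_ge0.
apply: lee_nneseries => [j _ _|j _]; first by rewrite lee_fin box_vol_ge0.
by rewrite /c' /d' box_vol_set_coord /box_vol big_ord1 mulrC.
Qed.

Lemma leb_outer_box_cylinder (a b : T) i (X : set R) : (forall j, a j <= b j) ->
  (louter (box a b `&` [set x | X (x i)]) <=
   leb_outer (box (cst (a i)) (cst (b i)) `&` to_R1 X) * (face_vol a b i)%:E)%E.
Proof.
move=> ab; set S := box (cst _) _ `&` _.
have f_ge0 := face_vol_ge0 i ab.
have S_le : (leb_outer S <= (b i - a i)%:E)%E.
  apply: le_trans (le_leb_outer (@subIsetl _ _ _)) _.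
  apply: le_trans (leb_outer_box (k := 0) (fun=> ab i)) _.
  by rewrite /box_vol big_ord1.
have Sfin : leb_outer S \is a fin_num.
  by rewrite ge0_fin_numE ?leb_outer_ge0 // (le_lt_trans S_le) ?ltry.
rewrite muleC; apply/lee_addgt0Pr => e e0.
(* dividing by [face_vol + 1] absorbs the face volume, even when it vanishes *)
have e'0 : 0 < e / (face_vol a b i + 1) by rewrite divr_gt0 // ltr_wpDl.
have [c [d [cd Scov lt]]] := leb_outer_approx e'0 Sfin.
apply: le_trans (leb_outer_cylinder_cover ab cd Scov) _.
set s := (\sum_(0 <= j <oo) _)%E in lt *.
have s_ge0 : (0 <= s)%E by apply: nneseries_ge0 => j _ _; rewrite lee_fin box_vol_ge0.
have sfin : s \is a fin_num.
  by rewrite ge0_fin_numE // (lt_trans lt) // -(fineK Sfin) -EFinD ltry.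
move: lt s_ge0; rewrite -(fineK sfin) -(fineK Sfin) -EFinD lte_fin lee_fin => lt s_ge0.
rewrite -EFinM -EFinM -EFinD lee_fin.
have : e / (face_vol a b i + 1) * (face_vol a b i + 1) = e.
  by rewrite divfK // gt_eqF // ltr_wpDl.
nra.
Qed.

Lemma leb_measurable_cylinder i (X : set R) :
  leb_measurable (to_R1 X) -> leb_measurable [set x : T | X (x i)].
Proof.
move=> mX; apply: le_leb_measurable => Y.
apply: le_ereal_inf_tmp => _ [a [b [ab Ycov ->]]].
have slice F : (louter (Y `&` F) <= \sum_(0 <= j <oo) louter (box (a j) (b j) `&` F))%E.
  apply: le_trans (outer_measure_sigma_subadditive louter _).
  by apply: le_leb_outer => x [/Ycov[j _ abx] Fx]; exists j.
apply: le_trans (leeD (slice _) (slice _)) _.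
rewrite -nneseriesD => [|j _ _|j _ _]; last 2 first.
- exact: leb_outer_ge0.
- exact: leb_outer_ge0.
apply: lee_nneseries => [j _ _|j _]; first by rewrite adde_ge0 ?leb_outer_ge0.
apply: le_trans (leeD (leb_outer_box_cylinder i X (ab j))
                      (leb_outer_box_cylinder i (~` X) (ab j))) _.
rewrite -muleDl //; last by rewrite ge0_adde_def // inE leb_outer_ge0.
rewrite -mX (box_vol_face _ _ i) EFinM lee_wpmul2r ?lee_fin ?face_vol_ge0 //.
by apply: le_trans (leb_outer_box (k := 0) (fun=> ab j i)) _; rewrite /box_vol big_ord1.
Qed.

End box_slices.

Section line_outer_measure.
Variable R : realType.
Local Notation lam X := (@leb_outer R 1 (to_R1 X)).

Lemma box_vol1 (c d : 'I_1 -> R) : box_vol c d = d ord0 - c ord0.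
Proof. by rewrite /box_vol big_ord1. Qed.

Lemma le_leb_outer1 (X Y : set R) : X `<=` Y -> (lam X <= lam Y)%E.
Proof. by move=> XY; apply: le_leb_outer => y; exact: XY. Qed.

Lemma lebesgue_measure_cc (u v : R) : u <= v ->
  lebesgue_measure [set` `[u, v]] = (v - u)%:E.
Proof.
move=> uv; rewrite lebesgue_measure_itv /= lte_fin.
by case: ltgtP uv => // -> _; rewrite subrr.
Qed.

Lemma leb_outer1_itv_ge (u v : R) : u <= v ->
  ((v - u)%:E <= lam [set x | (u <= x <= v)%R])%E.
Proof.
move=> uv; apply: le_ereal_inf_tmp => _ [c [d [cd cov ->]]].
rewrite -lebesgue_measure_cc //.
under eq_eseriesr do rewrite box_vol1 -lebesgue_measure_cc ?cd //.
apply: measure_sigma_subadditive => [j||x]; try exact: measurable_itv.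
rewrite /= in_itv /= => ux; have [j _ cdx] := cov (cst x) ux.
by exists j => //=; rewrite in_itv /=; exact: cdx ord0.
Qed.

Lemma leb_outer1_itv_le (u v : R) : u <= v ->
  (lam [set x | (u <= x <= v)%R] <= (v - u)%:E)%E.
Proof.
move=> uv; rewrite -[X in X%:E](box_vol1 (cst u) (cst v)).
apply: le_trans (leb_outer_box (k := 0) (fun=> uv)).
by apply: le_leb_outer => y /= uyv i; rewrite (ord1 i).
Qed.

Lemma leb_measurable1_itv (u v : R) : leb_measurable (to_R1 [set x | u <= x <= v]).
Proof.
rewrite (_ : to_R1 _ = [set y | u <= y ord0] `&` [set y | y ord0 <= v]).
  exact/leb_measurableI/leb_measurable_coord_le/leb_measurable_coord_ge.
by rewrite /to_R1; apply/seteqP; split => y /= => [/andP[]|[-> ->]].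
Qed.

Lemma leb_outer1_dilate (s : R) (X : set R) : 0 < s ->
  (lam [set y | X (y / s)%R] <= s%:E * lam X)%E.
Proof.
move=> s0; suff : ((s^-1)%:E * lam [set y | X (y / s)%R] <= lam X)%E.
  move=> key; rewrite -[X in (X <= _)%E]mul1e -(divff (lt0r_neq0 s0)) EFinM -muleA.
  by rewrite lee_wpmul2l // lee_fin ltW.
apply: le_ereal_inf_tmp => _ [c [d [cd cov ->]]].
have sc j l : s * c j l <= s * d j l by rewrite ler_pM2l.
apply: le_trans (lee_wpmul2l _ (leb_outer_le_cover sc _)) _.
- by rewrite lee_fin invr_ge0 ltW.
- move=> y Xy; have [j _ cdy] := cov (cst (y ord0 / s)) Xy.
  exists j => // l; rewrite (ord1 l).
  have -> : y ord0 = s * (y ord0 / s) by rewrite mulrC divfK ?gt_eqF.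
  by rewrite !ler_pM2l //; exact: cdy ord0.
rewrite -nneseriesZl => [|j _]; last by rewrite lee_fin box_vol_ge0.
apply: lee_nneseries => [j _ _|j _].
  by apply: mule_ge0; rewrite lee_fin ?invr_ge0; [exact: ltW|exact: box_vol_ge0 (sc j)].
by rewrite !box_vol1 -!EFinM -mulrBr mulKf ?gt_eqF.
Qed.

End line_outer_measure.

(** * Steinhaus' theorem and the Cauchy equation *)

Section steinhaus.
Variable R : realType.
Local Notation lam X := (@leb_outer R 1 (to_R1 X)).

Lemma leb_outer1_dense_itv (E : set R) : (0 < lam E)%E -> lam E \is a fin_num ->
  exists c d, c <= d /\ ((3 / 4 * (d - c))%:E < lam (E `&` [set x | (c <= x <= d)%R]))%E.
Proof.
move=> E_gt0 Efin; set l := fine (lam E).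
have El : lam E = l%:E by rewrite fineK.
have l0 : 0 < l by rewrite -lte_fin -El.
have [c [d [cd Ecov lt]]] := leb_outer_approx (divr_gt0 l0 (ltr0n _ 3)) Efin.
(* Otherwise E fills at most 3/4 of each box of a cover of total length
   < 4/3 lam E, which forces lam E < lam E. *)
apply: contrapT => nodense.
have dense j : (lam (E `&` [set x | (c j ord0 <= x <= d j ord0)%R]) <=
    (3 / 4 * box_vol (c j) (d j))%:E)%E.
  rewrite leNgt box_vol1; apply/negP => lt_j; apply: nodense.
  by exists (c j ord0), (d j ord0); split => //; exact: cd.
have : (lam E <= (3 / 4)%:E * \sum_(0 <= j <oo) (box_vol (c j) (d j))%:E)%E.
  rewrite -nneseriesZl => [|j _]; last by rewrite lee_fin box_vol_ge0.
  apply: le_trans (le_leb_outer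
    (y := \bigcup_j to_R1 (E `&` [set x | (c j ord0 <= x <= d j ord0)%R])) _) _.
    by move=> y Ey; have [j _ cdy] := Ecov y Ey; exists j => //; split => //; exact: cdy.
  apply: le_trans (outer_measure_sigma_subadditive _ _) _.
  by apply: lee_nneseries => [j _ _|j _]; [exact: leb_outer_ge0|rewrite -EFinM; exact: dense].
set s := (\sum_(0 <= j <oo) _)%E in lt *.
have s_ge0 : (0 <= s)%E by apply: nneseries_ge0 => j _ _; rewrite lee_fin box_vol_ge0.
have sfin : s \is a fin_num by rewrite ge0_fin_numE // (lt_trans lt) // El ltry.
have := fine_ge0 s_ge0; move: lt; rewrite -(fineK sfin) El -EFinM -EFinD lte_fin lee_fin.
lra.
Qed.

Lemma leb_measurable1_dilate_meet (A : set R) (c d s : R) :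
  leb_measurable (to_R1 A) -> A `<=` [set x | c <= x <= d] -> 0 < c -> c <= d ->
  ((3 / 4 * (d - c))%:E < lam A)%E -> 1 <= s <= 1 + (d - c) / (2 * d) ->
  exists x y, [/\ A x, A y & x = s * y].
Proof.
(* Otherwise A and its dilate sA are disjoint, both of measure >= lam A, and fit
   in [c, s d], whose length is less than 2 lam A. *)
move=> mA Acd c0 cd A_gt /andP[s1 s_le]; apply: contrapT => nAs.
have s0 : 0 < s by lra.
set sA := [set z | A (z / s)].
have A_le := le_trans (le_leb_outer1 Acd) (leb_outer1_itv_le cd).
have Afin : lam A \is a fin_num.
  by rewrite ge0_fin_numE ?leb_outer_ge0 // (le_lt_trans A_le) ?ltry.
have lam_AsA : lam (A `|` sA) = (lam A + lam sA)%E.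
  have AsA_A : to_R1 (A `|` sA) `&` to_R1 A = to_R1 A.
    by apply/seteqP; split => y /= => [[]|Ay] //; split => //; left.
  have AsA_nA : to_R1 (A `|` sA) `&` ~` to_R1 A = to_R1 sA.
    apply/seteqP; split => y /= => [[[]]|sAy] //; split; first by right.
    move=> Ay; apply: nAs; exists (y ord0), (y ord0 / s).
    by split => //; rewrite mulrC divfK ?gt_eqF.
  by rewrite (mA (to_R1 (A `|` sA))) AsA_A AsA_nA.
have A_le_sA : (lam A <= lam sA)%E.
  have := @leb_outer1_dilate _ s^-1 sA; rewrite invr_gt0 => /(_ s0).
  rewrite (_ : to_R1 [set y | sA (y / s^-1)] = to_R1 A); last first.
    by apply/seteqP; split => y; rewrite /to_R1 /sA /= invrK mulfK ?gt_eqF.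
  move/le_trans; apply; apply: gee_pMl => //; first exact: leb_outer_ge0.
  by rewrite lee_fin invf_le1.
have AsA_le : (lam (A `|` sA) <= (s * d - c)%:E)%E.
  have csd : c <= s * d by nra.
  apply: le_trans (leb_outer1_itv_le csd).
  apply: le_leb_outer1 => y [/Acd /andP[cy yd]|/Acd /andP[cy yd]].
    by apply/andP; split; nra.
  have -> : y = s * (y / s) by rewrite mulrC divfK ?gt_eqF.
  by apply/andP; split; nra.
have sAfin : lam sA \is a fin_num.
  rewrite ge0_fin_numE ?leb_outer_ge0 // (le_lt_trans _ (le_lt_trans AsA_le (ltry _))) //.
  by apply: le_leb_outer => y ?; right.
have sd : s * d <= d + (d - c) / 2.
  have d0 : 0 < d by lra.
  have <- : (1 + (d - c) / (2 * d)) * d = d + (d - c) / 2 by field; rewrite gt_eqF.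
  by rewrite ler_wpM2r // ltW.
move: A_gt A_le_sA AsA_le; rewrite lam_AsA -(fineK Afin) -(fineK sAfin).
rewrite -EFinD !lte_fin !lee_fin; lra.
Qed.

Lemma steinhaus_ratio (E : set R) : leb_measurable (to_R1 E) ->
  E `<=` [set x | 1 <= x <= 2] -> (0 < lam E)%E ->
  exists2 dl, 0 < dl & forall s, 1 <= s <= 1 + dl ->
    exists x y, [/\ E x, E y & x = s * y].
Proof.
move=> mE E12 E_gt0.
have E_le := le_trans (le_leb_outer1 E12) (leb_outer1_itv_le (ler1n R 2)).
have Efin : lam E \is a fin_num.
  by rewrite ge0_fin_numE ?leb_outer_ge0 // (le_lt_trans E_le) ?ltry.
have [c [d [cd cd_dense]]] := leb_outer1_dense_itv E_gt0 Efin.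
set A := E `&` _ in cd_dense.
have mA : leb_measurable (to_R1 A) by exact/leb_measurableI/leb_measurable1_itv.
set c' := Num.max c 1; set d' := Num.min d 2.
have Acd' : A `<=` [set x | c' <= x <= d'].
  by move=> x [/E12 /andP[x1 x2] /andP[xc xd]]; rewrite /= ge_max le_min xc x1 xd x2.
have cd'_lt : c' < d'.
  rewrite ltNge; apply/negP => dc'.
  have : (lam A <= (c' - c')%:E)%E.
    apply: le_trans (leb_outer1_itv_le (lexx c')).
    by apply: le_leb_outer1 => x /Acd' /andP[xc xd]; rewrite /= xc (le_trans xd dc').
  by rewrite subrr; move/(lt_le_trans cd_dense); rewrite lte_fin; lra.
have c'1 : 1 <= c' by rewrite /c' le_max lexx orbT.
have A_gt : ((3 / 4 * (d' - c'))%:E < lam A)%E.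
  apply: le_lt_trans cd_dense; rewrite lee_fin.
  have : c <= c' by rewrite /c' le_max lexx.
  have : d' <= d by rewrite /d' ge_min lexx.
  lra.
exists ((d' - c') / (2 * d')); first by apply: divr_gt0; lra.
move=> s hs; have c'0 : 0 < c' by lra.
have [x [y [[Ex _] [Ey _] xy]]] :=
  leb_measurable1_dilate_meet mA Acd' c'0 (ltW cd'_lt) A_gt hs.
by exists x, y.
Qed.

End steinhaus.

Section cauchy_equation.
Variable R : realType.
Variable h : R -> R.
Hypothesis hD : forall u v, h (u + v) = h u + h v.

Let h0 : h 0 = 0.
Proof. by have := hD 0 0; rewrite addr0 => /eqP; rewrite -subr_eq subrr eq_sym => /eqP. Qed.

Let hN u : h (- u) = - h u.
Proof. by apply/eqP; rewrite -addr_eq0 -hD addNr h0. Qed.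

Let hMn (n : nat) u : h (n%:R * u) = n%:R * h u.
Proof. by elim: n => [|n IH]; rewrite ?mul0r ?h0 // -natr1 !mulrDl !mul1r hD IH. Qed.

Lemma additive_bounded_eq0 (M : R) : (forall u, `|h u| <= M) -> forall u, h u = 0.
Proof.
move=> hM u; apply/eqP; apply: contraT => hu.
have hu_gt0 : 0 < `|h u| by rewrite normr_gt0.
have M0 : 0 <= M := le_trans (normr_ge0 _) (hM u).
have := archi_boundP (divr_ge0 M0 (ltW hu_gt0)); set n := Num.Def.archi_bound _.
rewrite ltr_pdivrMr // => /(le_lt_trans (hM (n%:R * u))).
by rewrite hMn normrM ger0_norm ?ler0n // ltxx.
Qed.

Lemma additive_periodic_bounded (eta M : R) : 0 < eta -> h eta = 0 ->
  (forall u, 0 <= u <= eta -> `|h u| <= M) -> forall u, `|h u| <= M.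
Proof.
move=> eta0 heta hM.
have hM_nat (n : nat) u : 0 <= u <= n%:R * eta -> `|h u| <= M.
  elim: n u => [|n IH] u /andP[u0 u_le].
    by apply: hM; rewrite u0 (le_trans u_le) // mul0r ltW.
  have [u_eta|eta_u] := leP u eta; first by apply: hM; rewrite u0.
  have -> : h u = h (u - eta) by rewrite hD hN heta oppr0 addr0.
  by apply: IH; move: u_le; rewrite -natr1 mulrDl mul1r; lra.
move=> u; wlog u0 : u / 0 <= u.
  by move=> W; have [/W //|u0] := leP 0 u; rewrite -normrN -hN W //; lra.
apply: (hM_nat (Num.Def.archi_bound (u / eta))); rewrite u0 /=.
have := archi_boundP (divr_ge0 u0 (ltW eta0)).
by rewrite ltr_pdivrMr // => /ltW.
Qed.

End cauchy_equation.

Lemma log_additive_bounded (R : realType) (B : R -> R) (dl M : R) :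
  (forall x y, 0 < x -> 0 < y -> B (x * y) = B x + B y) -> 0 < dl ->
  (forall s, 1 <= s <= 1 + dl -> `|B s| <= M) ->
  exists c, forall x, 0 < x -> B x = c * ln x.
Proof.
move=> BM dl0 B_le; set eta := ln (1 + dl).
have eta0 : 0 < eta by apply: ln_gt0; lra.
have expR_eta : expR eta = 1 + dl by rewrite /eta lnK // posrE; lra.
pose c := B (expR eta) / eta.
pose h u := B (expR u) - c * u.
have hD u v : h (u + v) = h u + h v by rewrite /h expRD BM ?expR_gt0 //; ring.
have heta : h eta = 0 by rewrite /h /c divfK ?gt_eqF // subrr.
have h_le u : 0 <= u <= eta -> `|h u| <= M + `|c| * eta.
  move=> /andP[u0 u_le]; apply: le_trans (ler_normB _ _) _; apply: lerD.
    by apply: B_le; rewrite -expR_eta -expR0 !ler_expR u0.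
  by rewrite normrM (ger0_norm u0) ler_wpM2l.
have h0 := additive_bounded_eq0 hD (additive_periodic_bounded hD eta0 heta h_le).
exists c => x x0; have := h0 (ln x); rewrite /h lnK ?posrE //.
by move/eqP; rewrite subr_eq0 => /eqP.
Qed.

(** * Gap functions *)

Section simplex.
Variables (R : realType) (n : nat).
Local Notation V := ('I_n -> R).
Implicit Types (p q r : V) (g : V -> V -> R) (phi : R -> R).

Definition basis_vec (i : 'I_n) : V := fun j => if j == i then 1 else 0.

Lemma big_supp p (F : 'I_n -> R) : (forall i, 0 <= p i) ->
  \sum_(i < n | 0 < p i) p i * F i = \sum_(i < n) p i * F i.
Proof.
move=> p_ge0; rewrite big_mkcond; apply: eq_bigr => i _.
by case: ltP => // pi_le0; rewrite (@le_anti _ _ (p i) 0) ?pi_le0 ?p_ge0 ?mul0r.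
Qed.

Lemma dotC (u v : V) : dot u v = dot v u.
Proof. by apply: eq_bigr => i _; rewrite mulrC. Qed.

Lemma dot_basis_vec i (v : V) : dot (basis_vec i) v = v i.
Proof.
rewrite /dot (bigD1 i) //= /basis_vec eqxx mul1r big1 ?addr0 // => j /negbTE ->.
by rewrite mul0r.
Qed.

Lemma dot_mix p q (v : V) (t : R) :
  dot (fun i => t * p i + (1 - t) * q i) v = t * dot p v + (1 - t) * dot q v.
Proof. by rewrite /dot !mulr_sumr -big_split /=; apply: eq_bigr => i _; ring. Qed.

Lemma inD_ge0 p r : inD p r -> forall i, 0 <= p i.
Proof. by move=> [[p01 _] _] i; case/andP: (p01 i). Qed.

Lemma inD_supp p r i : inD p r -> 0 < p i -> 0 < r i.
Proof. by case=> _ [_]; apply. Qed.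

Lemma inD_sum1 p r : inD p r -> \sum_(i < n | 0 < p i) p i = 1.
Proof.
move=> pr; rewrite -(proj2 pr.1); have := big_supp (fun=> 1) (inD_ge0 pr).
by under eq_bigr do rewrite mulr1; under [X in _ = X -> _]eq_bigr do rewrite mulr1.
Qed.

Lemma inD_exists_supp p r : inD p r -> exists i, 0 < p i.
Proof.
move=> pr; apply: contrapT => /forallNP p_le0.
have := inD_sum1 pr; rewrite big_pred0 => [/esym/eqP|i]; first by rewrite oner_eq0.
by apply: negbTE; apply/negP; exact: p_le0.
Qed.

Lemma wmean_dot p r : inD p r -> wmean p r = dot p r.
Proof. by move=> pr; rewrite /wmean big_supp //; exact: inD_ge0 pr. Qed.

Lemma dot_gt0 p r : inD p r -> 0 < dot p r.
Proof.
move=> pr; have [i pi] := inD_exists_supp pr.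
have [_ [r_ge0 _]] := pr.
rewrite /dot (bigD1 i) //= ltr_pwDl ?mulr_gt0 ?(inD_supp pr) //.
by apply: sumr_ge0 => j _; rewrite mulr_ge0 ?(inD_ge0 pr).
Qed.

Lemma inD_nonneg_nz p r : inD p r -> nonneg_nz r.
Proof.
move=> pr; split; first by case: pr => _ [].
by move=> r0; have := dot_gt0 pr; rewrite /dot r0 big1 ?ltxx // => i _; rewrite mulr0.
Qed.

Lemma inD_basis_vec i r : nonneg r -> 0 < r i -> inD (basis_vec i) r.
Proof.
move=> r_ge0 ri; split; [split|split=> //].
- by move=> j; rewrite /basis_vec; case: (j == i); rewrite ?lexx ?ler01.
- rewrite -[RHS](dot_basis_vec i (fun=> 1)).
  by apply: eq_bigr => j _; rewrite mulr1.
- by move=> j; rewrite /basis_vec; case: eqP => [->|] //; rewrite ltxx.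
Qed.

Lemma inD_mix p q r (t : R) : inD p r -> inD q r -> 0 <= t <= 1 ->
  inD (fun i => t * p i + (1 - t) * q i) r.
Proof.
move=> pr qr /andP[t0 t1]; have p_ge0 := inD_ge0 pr; have q_ge0 := inD_ge0 qr.
have [[p01 p1] [r_ge0 pr_supp]] := pr; have [[q01 q1] [_ qr_supp]] := qr.
split; [split|split => // i].
- move=> i; have /andP[pi0 pi1] := p01 i; have /andP[qi0 qi1] := q01 i.
  by apply/andP; split; nra.
- by rewrite big_split /= -!mulr_sumr p1 q1; ring.
- have [/pr_supp //|pi_le0] := ltP 0 (p i).
  have [/qr_supp //|qi_le0] := ltP 0 (q i).
  have -> : p i = 0 by apply/le_anti; rewrite pi_le0 p_ge0.
  have -> : q i = 0 by apply/le_anti; rewrite qi_le0 q_ge0.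
  by rewrite !mulr0 addr0 ltxx.
Qed.

Lemma inD_scale p r (al : R) : inD p r -> 0 < al -> inD p (fun i => al * r i).
Proof.
move=> [p01 [r_ge0 pr]] al0; split => //; split => i.
  exact: mulr_ge0 (ltW al0) (r_ge0 i).
by move/pr; exact: mulr_gt0 al0.
Qed.

Lemma gap_dot g phi p r : is_gap_function g phi -> inD p r ->
  g p r = phi (dot p r) - dot p (fun i => phi (r i)).
Proof. by move=> gphi pr; rewrite gphi // wmean_dot // big_supp //; exact: inD_ge0 pr. Qed.

Lemma gap_D2 g phi : is_gap_function g phi -> cond_D2 g.
Proof.
move=> gphi p r pr r_cst; have [i0 pi0] := inD_exists_supp pr.
have dot_cst (F : R -> R) : dot p (fun i => F (r i)) = F (r i0).
  rewrite /dot -big_supp; last exact: inD_ge0 pr.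
  rewrite (eq_bigr (fun i => p i * F (r i0))) => [|i pi]; last by rewrite (r_cst i i0).
  by rewrite -mulr_suml (inD_sum1 pr) mul1r.
by rewrite (gap_dot gphi pr) (dot_cst id) dot_cst subrr.
Qed.

Lemma cond_D2_basis_vec g i r : cond_D2 g -> nonneg r -> 0 < r i ->
  g (basis_vec i) r = 0.
Proof.
move=> gD2 r_ge0 ri; apply: gD2; first exact: inD_basis_vec.
by move=> j j'; rewrite /basis_vec; do 2![case: eqP => [->|]]; rewrite ?ltxx.
Qed.

Lemma D2D4_gap g : cond_D2 g -> cond_D4 g ->
  exists phi, leb_measurable_fun1 (@pos_reals R) phi /\ is_gap_function g phi.
Proof.
move=> gD2 [a [b [_ mb gD4]]]; exists b; split => // p r pr.
have r_nz := inD_nonneg_nz pr.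
have a_vertex i : 0 < r i -> a r i = - b (r i).
  move=> ri; have := gD4 (r i) r ri r_nz _ (inD_basis_vec r_nz.1 ri) (dot_basis_vec i r).
  rewrite (cond_D2_basis_vec gD2 r_nz.1 ri) dotC dot_basis_vec.
  by move/eqP; rewrite eq_sym addr_eq0 => /eqP.
rewrite (gD4 _ r (dot_gt0 pr) r_nz p pr erefl) wmean_dot // addrC; congr (_ + _).
rewrite dotC /dot -!(big_supp _ (inD_ge0 pr)) -sumrN; apply: eq_bigr => i pi.
by rewrite a_vertex ?(inD_supp pr pi) // mulrN.
Qed.

End simplex.
Arguments basis_vec {R n}.

Section concavity.
Variables (R : realType) (n : nat).
Local Notation V := ('I_n -> R).
Implicit Types (r : V) (g : V -> V -> R) (phi : R -> R).

Definition two_point (i0 : 'I_n) (x y : R) : V := fun i => if i == i0 then x else y.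

Lemma two_point_l i0 x y : two_point i0 x y i0 = x.
Proof. by rewrite /two_point eqxx. Qed.

Lemma two_point_r (i0 i1 : 'I_n) x y : i0 != i1 -> two_point i0 x y i1 = y.
Proof. by rewrite /two_point eq_sym => /negbTE ->. Qed.

Lemma two_point_ge0 i0 x y : 0 <= x -> 0 <= y -> nonneg (two_point i0 x y).
Proof. by move=> x0 y0 i; rewrite /two_point; case: ifP. Qed.

Lemma gap_mix_basis_vec g phi (i0 i1 : 'I_n) r (t : R) : is_gap_function g phi ->
  nonneg r -> 0 < r i0 -> 0 < r i1 -> 0 <= t <= 1 ->
  g (fun i => t * basis_vec i0 i + (1 - t) * basis_vec i1 i) r =
    phi (t * r i0 + (1 - t) * r i1) - (t * phi (r i0) + (1 - t) * phi (r i1)).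
Proof.
move=> gphi r_ge0 r0 r1 t01.
have := inD_mix (inD_basis_vec r_ge0 r0) (inD_basis_vec r_ge0 r1) t01.
by move/(gap_dot gphi) ->; rewrite !dot_mix !dot_basis_vec.
Qed.

Lemma gap_concave g phi (i0 i1 : 'I_n) : i0 != i1 -> is_gap_function g phi ->
  concave_on_pos phi <-> cond_D1 g.
Proof.
move=> i01 gphi; split.
- move=> phi_cvx r _ p1 p2 t pr1 pr2 t01; have pr := inD_mix pr1 pr2 t01.
  rewrite !(gap_dot gphi) // !dot_mix.
  have := phi_cvx _ _ t (dot_gt0 pr1) (dot_gt0 pr2) t01; lra.
- move=> gD1 x y t x0 y0 t01; set r := two_point i0 x y.
  have r0 : r i0 = x := two_point_l i0 x y.
  have r1 : r i1 = y := two_point_r x y i01.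
  have r_ge0 : nonneg r := two_point_ge0 i0 (ltW x0) (ltW y0).
  have r_nz : nonneg_nz r.
    by split => // /(congr1 (fun f => f i0)); rewrite r0; lra.
  have ri0 : 0 < r i0 by rewrite r0.
  have ri1 : 0 < r i1 by rewrite r1.
  have := gD1 r r_nz _ _ t (inD_basis_vec r_ge0 ri0) (inD_basis_vec r_ge0 ri1) t01.
  rewrite !(cond_D2_basis_vec (gap_D2 gphi)) //.
  rewrite (@gap_mix_basis_vec g phi i0 i1 r t gphi) // r0 r1; lra.
Qed.

End concavity.

Section excess_growth_rate.
Variables (R : realType) (n : nat).
Local Notation V := ('I_n -> R).
Implicit Types (p r : V) (g : V -> V -> R).

Lemma gap_Gamma g (c : R) : (forall p r, inD p r -> g p r = c * Gamma p r) ->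
  is_gap_function g (fun x => c * ln x).
Proof.
move=> gG p r pr; rewrite gG // /Gamma mulrBr mulr_sumr; congr (_ - _).
by apply: eq_bigr => i _; rewrite mulrCA.
Qed.

Lemma Gamma_scale p r (al : R) : inD p r -> 0 < al ->
  Gamma p (fun i => al * r i) = Gamma p r.
Proof.
move=> pr al0; have pr' := inD_scale pr al0.
have dot_scale : dot p (fun i => al * r i) = al * dot p r.
  by rewrite /dot mulr_sumr; apply: eq_bigr => i _; rewrite mulrCA.
rewrite /Gamma !wmean_dot // dot_scale lnM ?posrE ?dot_gt0 //.
rewrite (eq_bigr (fun i => p i * ln al + p i * ln (r i))) => [|i pi]; last first.
  by rewrite lnM ?posrE ?mulrDr // (inD_supp pr pi).
by rewrite big_split /= -mulr_suml (inD_sum1 pr) mul1r; ring.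
Qed.

Lemma Gamma_D3 g (c : R) : (forall p r, inD p r -> g p r = c * Gamma p r) ->
  cond_D3 g.
Proof. by move=> gG p r al pr al0; rewrite !gG ?Gamma_scale //; exact: inD_scale. Qed.

Lemma concave_on_pos_scale_ln (c : R) :
  concave_on_pos (fun x => c * ln x) <-> 0 <= c.
Proof.
split => [c_cvx|c0 x y t x0 y0 /andP[t0 t1]].
- have half01 : 0 <= (1 / 2 : R) <= 1 by apply/andP; split; lra.
  have := c_cvx 1 4 (1 / 2) ltr01 (ltr0n _ 4) half01.
  rewrite ln1 mulr0 mulr0 add0r -[4]/(2 * 2)%:R natrM lnM ?posrE ?ltr0n //.
  have -> : 1 / 2 * 1 + (1 - 1 / 2) * (2 * 2) = 5 / 2 :> R by field.
  have ln_lt : ln (2 : R) < ln (5 / 2) by rewrite ltr_ln ?posrE //; lra.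
  rewrite leNgt => le_c; apply/negP => c_lt0.
  by move: le_c; nra.
- have ln_cvx := concave_ln (Itv01 t0 t1) x0 y0.
  change (is_true (t * ln x + (1 - t) * ln y <= ln (t * x + (1 - t) * y))) in ln_cvx.
  nra.
Qed.

Lemma Gamma_D1 g (c : R) (i0 i1 : 'I_n) : i0 != i1 ->
  (forall p r, inD p r -> g p r = c * Gamma p r) -> (0 <= c <-> cond_D1 g).
Proof.
by move=> i01 gG; rewrite -concave_on_pos_scale_ln; exact: gap_concave i01 (gap_Gamma gG).
Qed.

End excess_growth_rate.

Section measurable_generator.
Variables (R : realType) (phi : R -> R).
Hypothesis mphi : leb_measurable_fun1 (@pos_reals R) phi.

Lemma leb_measurable_fun1_lt t : leb_measurable (to_R1 [set y | 0 < y /\ phi y < t]).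
Proof. exact: mphi.2. Qed.

Lemma leb_measurable_fun1_gt s : leb_measurable (to_R1 [set y | 0 < y /\ s < phi y]).
Proof.
rewrite (_ : to_R1 _ = \bigcup_m (to_R1 (@pos_reals R) `\`
    to_R1 [set y | 0 < y /\ phi y < s + m.+1%:R^-1])).
  apply: leb_measurable_bigcup => m.
  by apply: leb_measurableD; [exact: mphi.1|exact: leb_measurable_fun1_lt].
apply/seteqP; split => y /= => [[y0 s_lt]|[m _ [y0 /not_andP[//|/negP]]]]; last first.
  by rewrite -leNgt => le; split => //; apply: lt_le_trans le; rewrite ltrDl invr_gt0 ltr0n.
have d0 : 0 < phi (y ord0) - s by rewrite subr_gt0.
have dinv : 0 < (phi (y ord0) - s)^-1 by rewrite invr_gt0.
have := archi_boundP (ltW dinv); set m := Num.Def.archi_bound _.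
move=> m_gt; exists m => //; split => // -[_]; apply/negP; rewrite -leNgt -lerBrDl.
rewrite -[leRHS]invrK lef_pV2 ?posrE ?invr_gt0 //.
by apply: le_trans (ltW m_gt) _; rewrite ler_nat.
Qed.

End measurable_generator.

Lemma leb_measurable_fun1_scale_ln (R : realType) (c : R) :
  leb_measurable_fun1 (@pos_reals R) (fun x => c * ln x).
Proof.
split=> [|t]; first exact: leb_measurable_coord_gt.
have [c_lt0|c_gt0|->] := ltgtP c 0.
- have tc : c * (t / c) = t by rewrite mulrCA divff ?lt_eqF // mulr1.
  rewrite (_ : _ `&` _ = to_R1 (@pos_reals R) `&` [set x | expR (t / c) < x ord0]).
    exact/leb_measurableI/leb_measurable_coord_gt/leb_measurable_coord_gt.
  apply/seteqP; split => x /= [x0 xt]; split => //.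
    by rewrite -[x ord0]lnK ?posrE // ltr_expR -(ltr_nM2l c_lt0) tc.
  by rewrite -tc ltr_nM2l // -ltr_expR lnK ?posrE.
- have tc : c * (t / c) = t by rewrite mulrCA divff ?gt_eqF // mulr1.
  rewrite (_ : _ `&` _ = to_R1 (@pos_reals R) `&` [set x | x ord0 < expR (t / c)]).
    exact/leb_measurableI/leb_measurable_coord_lt/leb_measurable_coord_gt.
  apply/seteqP; split => x /= [x0 xt]; split => //.
    by rewrite -[x ord0]lnK ?posrE // ltr_expR -(ltr_pM2l c_gt0) tc.
  by rewrite -tc ltr_pM2l // -ltr_expR lnK ?posrE.
- rewrite (_ : _ `&` _ = to_R1 (@pos_reals R) `&` [set _ | 0 < t]).
    exact/leb_measurableI/leb_measurable_cst/leb_measurable_coord_gt.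
  by apply/seteqP; split => x /= [x0 xt]; split => //; rewrite mul0r in xt *.
Qed.

Section gap_function_D4.
Variables (R : realType) (k : nat).
Local Notation T := ('I_k.+1 -> R).

Lemma leb_measurable_nonneg : leb_measurable (@nonneg R k.+1).
Proof.
rewrite (_ : @nonneg R k.+1 = ~` \bigcup_j [set x : T | x (inord j) < 0]).
  by apply/leb_measurableC/leb_measurable_bigcup => j; exact: leb_measurable_coord_lt.
apply/seteqP; split => x => [x_ge0 [j _]|nx i]; first by rewrite /= ltNge x_ge0.
by rewrite leNgt; apply/negP => xi; apply: nx; exists i => //; rewrite inord_val.
Qed.

Lemma leb_measurable_nonneg_nz : leb_measurable (@nonneg_nz R k.+1).
Proof.
rewrite (_ : @nonneg_nz R k.+1 = @nonneg R k.+1 `\` [set cst 0]); last first.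
  by apply/seteqP; split => x [].
exact: leb_measurableD leb_measurable_nonneg (leb_measurable_null (leb_outer_point _)).
Qed.

Lemma gap_D4 (g : T -> T -> R) (phi : R -> R) :
  leb_measurable_fun1 (@pos_reals R) phi -> is_gap_function g phi -> cond_D4 g.
Proof.
move=> mphi gphi.
pose a (r : T) := fun i => if 0 < r i then - phi (r i) else 0.
exists a, phi; split => // [j|m r m0 r_nz p pr <-].
  split=> [|t]; first exact: leb_measurable_nonneg_nz.
  rewrite (_ : _ `&` _ = @nonneg_nz R k.+1 `&` ([set x | 0 < x j /\ - t < phi (x j)] `|`
      ([set x | x j <= 0] `&` [set _ | 0 < t]))).
    apply: leb_measurableI; first exact: leb_measurable_nonneg_nz.
    apply: leb_measurableU.
      exact: (leb_measurable_cylinder j (leb_measurable_fun1_gt mphi (- t))).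
    exact/leb_measurableI/leb_measurable_cst/leb_measurable_coord_le.
  apply/seteqP; split => x /=; rewrite /a.
    move=> [x_nz]; case: ifP => x0 xt; split => //.
      by left; split => //; rewrite -ltrNl.
    by right; split => //; rewrite leNgt x0.
  move=> [x_nz [[x0 xt]|[x0 t0]]]; split => //; first by rewrite x0 ltrNl.
  by rewrite [0 < x j]ltNge x0.
rewrite (gap_dot gphi pr) [RHS]addrC [dot (a r) p]dotC; congr (_ + _).
rewrite /dot -!(big_supp _ (inD_ge0 pr)) -sumrN; apply: eq_bigr => i pi.
by rewrite /a (inD_supp pr pi) mulrN.
Qed.

End gap_function_D4.

(** * Measurable logarithmic generators *)

Section logarithmic_generator.
Variable R : realType.
Local Notation lam X := (@leb_outer R 1 (to_R1 X)).

Definition affine_on_pos (F : R -> R) := forall x y t, 0 < x -> 0 < y -> 0 <= t <= 1 ->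
  F (t * x + (1 - t) * y) = t * F x + (1 - t) * F y.

Lemma affine_on_posE (F : R -> R) : affine_on_pos F ->
  forall x, 0 < x -> F x = F 1 + (F 2 - F 1) * (x - 1).
Proof.
move=> F_aff x x0; have [x1|x1] := leP x 1.
  have t01 : 0 <= (2 - x)^-1 <= 1 by rewrite invr_ge0 invf_le1; lra.
  have := F_aff x 2 _ x0 (ltr0Sn _ 1) t01.
  have -> : (2 - x)^-1 * x + (1 - (2 - x)^-1) * 2 = 1 by field; lra.
  by move=> ->; field; lra.
have [x2|x2] := leP x 2.
  have t01 : 0 <= 2 - x <= 1 by apply/andP; split; lra.
  have := F_aff 1 2 _ ltr01 (ltr0Sn _ 1) t01.
  have -> : (2 - x) * 1 + (1 - (2 - x)) * 2 = x by ring.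
  by move=> ->; ring.
have t01 : 0 <= (x - 2) / (x - 1) <= 1.
  by rewrite divr_ge0 ?ler_pdivrMr /=; lra.
have := F_aff 1 x _ ltr01 x0 t01.
have -> : (x - 2) / (x - 1) * 1 + (1 - (x - 2) / (x - 1)) * x = 2 by field; lra.
by move=> ->; field; lra.
Qed.

Lemma dilation_affine_log_additive (phi : R -> R) :
  (forall al, 0 < al -> affine_on_pos (fun z => phi (al * z) - phi z)) ->
  exists d, forall x y, 0 < x -> 0 < y ->
    phi (x * y) - phi 1 - d * (x * y - 1) =
    (phi x - phi 1 - d * (x - 1)) + (phi y - phi 1 - d * (y - 1)).
Proof.
move=> dil_aff; pose A al := phi (al * 2) - phi 2 - phi al + phi 1.
have dil al x : 0 < al -> 0 < x ->
    phi (al * x) = phi x + (phi al - phi 1) + A al * (x - 1).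
  move=> al0 x0; have := affine_on_posE (dil_aff al al0) x0.
  rewrite /A mulr1; lra.
have A_sym al x : 0 < al -> 0 < x -> A al * (x - 1) = A x * (al - 1).
  move=> al0 x0; have := dil al x al0 x0; have := dil x al x0 al0.
  rewrite mulrC; lra.
exists (A 2) => x y x0 y0.
have Ax : A x = A 2 * (x - 1).
  by have := A_sym x 2 x0 (ltr0Sn _ 1); lra.
by rewrite dil // Ax; ring.
Qed.

Lemma log_additive_ln (B : R -> R) (E : set R) (M : R) :
  (forall x y, 0 < x -> 0 < y -> B (x * y) = B x + B y) ->
  leb_measurable (to_R1 E) -> E `<=` [set x | 1 <= x <= 2] -> (0 < lam E)%E ->
  (forall z, E z -> `|B z| <= M) ->
  exists c, forall x, 0 < x -> B x = c * ln x.
Proof.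
move=> BM mE E12 E_gt0 B_le.
have [dl dl0 ratio] := steinhaus_ratio mE E12 E_gt0.
apply: (log_additive_bounded BM dl0 (M := M + M)) => s s1.
have [x [y [Ex Ey xsy]]] := ratio s s1.
have y0 : 0 < y by have /andP[] := E12 y Ey; lra.
have s0 : 0 < s by case/andP: s1; lra.
have -> : B s = B x - B y by rewrite xsy BM //; ring.
by apply: le_trans (ler_normB _ _) _; rewrite lerD ?B_le.
Qed.

Lemma leb_measurable_fun1_bounded (phi : R -> R) :
  leb_measurable_fun1 (@pos_reals R) phi ->
  exists E M, [/\ leb_measurable (to_R1 E), E `<=` [set x | 1 <= x <= 2],
    (0 < lam E)%E & forall z, E z -> `|phi z| <= M].
Proof.
move=> mphi.
pose E (m : nat) := [set x : R | 1 <= x <= 2] `&`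
  ([set y | 0 < y /\ phi y < m%:R] `\` [set y | 0 < y /\ phi y < - m%:R]).
have [m Em_gt0] : exists m, (0 < lam (E m))%E.
  apply: contrapT => /forallNP Em0.
  have {}Em0 m : lam (E m) = 0%E.
    by apply/eqP; rewrite eq_le leb_outer_ge0 andbT leNgt; apply/negP/Em0.
  have itv_ge := leb_outer1_itv_ge (ler1n R 2).
  have : (lam [set x | (1 <= x <= 2)%R] <= \sum_(0 <= m <oo) lam (E m))%E.
    apply: le_trans (outer_measure_sigma_subadditive _ (fun m => to_R1 (E m))).
    apply: le_leb_outer => y /= y12; exists (Num.Def.archi_bound `|phi (y ord0)|) => //.
    have := archi_boundP (normr_ge0 (phi (y ord0))); rewrite ltr_norml => /andP[m_lt lt_m].
    by split => //; split; [split=> //; case/andP: y12; lra|case=> _; lra].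
  rewrite eseries0 // => /(le_trans itv_ge); rewrite lee_fin; lra.
exists (E m), m%:R; split => //.
- apply: leb_measurableI; first exact: leb_measurable1_itv.
  by apply: leb_measurableD; exact: leb_measurable_fun1_lt mphi _.
- by move=> x [].
- move=> z [_ [[z0 phi_lt] phi_ge]]; rewrite ler_norml (ltW phi_lt) andbT leNgt.
  by apply/negP => phi_lt'; apply: phi_ge.
Qed.

End logarithmic_generator.

Section gamma_characterisation.
Variables (R : realType) (n : nat).
Local Notation V := ('I_n -> R).

Lemma gap_affine_generator (g : V -> V -> R) (phi : R -> R) (c d e : R) :
  is_gap_function g phi -> (forall z, 0 < z -> phi z = c * ln z + d * z + e) ->
  forall p r, inD p r -> g p r = c * Gamma p r.
Proof.
move=> gphi phiE p r pr; rewrite gphi // /Gamma phiE; last by rewrite wmean_dot ?dot_gt0.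
rewrite (eq_bigr (fun i => c * (p i * ln (r i)) + d * (p i * r i) + e * p i)) => [|i pi].
  rewrite !big_split /= -!mulr_sumr (inD_sum1 pr).
  by rewrite -[\sum_(i < n | 0 < p i) p i * r i]/(wmean p r); ring.
by rewrite phiE ?(inD_supp pr pi) //; ring.
Qed.

Lemma D3_dilation_affine (g : V -> V -> R) (phi : R -> R) (i0 i1 : 'I_n) :
  i0 != i1 -> is_gap_function g phi -> cond_D3 g ->
  forall al, 0 < al -> affine_on_pos (fun z => phi (al * z) - phi z).
Proof.
move=> i01 gphi gD3 al al0 x y t x0 y0 t01; set r := two_point i0 x y.
have r0 : r i0 = x := two_point_l i0 x y.
have r1 : r i1 = y := two_point_r x y i01.
have r_ge0 : nonneg r := two_point_ge0 i0 (ltW x0) (ltW y0).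
have al_r_ge0 : nonneg (fun i => al * r i) by move=> i; exact: mulr_ge0 (ltW al0) (r_ge0 i).
have ri0 : 0 < r i0 by rewrite r0.
have ri1 : 0 < r i1 by rewrite r1.
have pr := inD_mix (inD_basis_vec r_ge0 ri0) (inD_basis_vec r_ge0 ri1) t01.
have := gD3 _ r al pr al0.
rewrite (@gap_mix_basis_vec _ _ g phi i0 i1 r t) ?r0 ?r1 //.
rewrite (@gap_mix_basis_vec _ _ g phi i0 i1 (fun i => al * r i) t) /= ?r0 ?r1 ?mulr_gt0 //.
have -> : t * (al * x) + (1 - t) * (al * y) = al * (t * x + (1 - t) * y) by ring.
lra.
Qed.

Lemma D234_Gamma (g : V -> V -> R) (i0 i1 : 'I_n) : i0 != i1 ->
  cond_D2 g -> cond_D3 g -> cond_D4 g ->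
  exists c : R, forall p r, inD p r -> g p r = c * Gamma p r.
Proof.
move=> i01 gD2 gD3 gD4; have [phi [mphi gphi]] := D2D4_gap gD2 gD4.
have [d B_mul] := dilation_affine_log_additive (D3_dilation_affine i01 gphi gD3).
have [E [M [mE E12 E_gt0 phi_le]]] := leb_measurable_fun1_bounded mphi.
pose B z := phi z - phi 1 - d * (z - 1).
have B_le z : E z -> `|B z| <= M + `|phi 1| + `|d|.
  move=> Ez; have /andP[z1 z2] := E12 z Ez.
  have dz : `|d * (z - 1)| <= `|d|.
    by rewrite normrM ler_piMr // ler_norml; apply/andP; split; lra.
  rewrite /B; apply: le_trans (ler_normB _ _) _; apply: lerD => //.
  by apply: le_trans (ler_normB _ _) _; rewrite lerD ?phi_le.
have [c B_ln] := log_additive_ln B_mul mE E12 E_gt0 B_le.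
exists c; apply: (gap_affine_generator (d := d) (e := phi 1 - d) gphi) => z z0.
by have := B_ln z z0; rewrite /B; lra.
Qed.

End gamma_characterisation.

Theorem mainTheorem11 (R : realType) (n : nat) (hn : (2 <= n)%N)
    (g : ('I_n -> R) -> ('I_n -> R) -> R)
    (hg : jointly_leb_measurable g) :
  ((exists phi : R -> R, leb_measurable_fun1 (@pos_reals R) phi /\ is_gap_function g phi)
     <-> cond_D2 g /\ cond_D4 g) /\
  (forall phi : R -> R, leb_measurable_fun1 (@pos_reals R) phi -> is_gap_function g phi ->
     (concave_on_pos phi <-> cond_D1 g)) /\
  ((cond_D2 g /\ cond_D3 g /\ cond_D4 g)
     <-> exists c : R, forall p r, inD p r -> g p r = c * Gamma p r) /\
  (forall c : R, (forall p r, inD p r -> g p r = c * Gamma p r) ->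
     (0 <= c <-> cond_D1 g)).
Proof.
case: n hn g hg => [//|k] hn g _.
have i01 : (ord0 : 'I_k.+1) != Ordinal hn by [].
split; [|split; [|split]].
- split=> [[phi [mphi gphi]]|[gD2 gD4]]; last exact: D2D4_gap.
  by split; [exact: gap_D2 gphi|exact: gap_D4 mphi gphi].
- by move=> phi _ gphi; exact: gap_concave i01 gphi.
- split=> [[gD2 [gD3 gD4]]|[c gG]]; first exact: D234_Gamma i01 gD2 gD3 gD4.
  have gphi := gap_Gamma gG.
  split; first exact: gap_D2 gphi.
  by split; [exact: Gamma_D3 gG|exact: gap_D4 (leb_measurable_fun1_scale_ln c) gphi].
- by move=> c gG; exact: Gamma_D1 i01 gG.
Qed.
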